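(* Let $r$ be an ELP rule of the form $A \leftarrow B, \neg C, \mathbf{not}\, D, \mathbf{not}\,\neg E, \neg\mathbf{not}\, F, \neg\mathbf{not}\,\neg G$, where $A,B,C,D,E,F,G$ are finite sets of atoms. Then $r$ is tautological if and only if at least one of the following holds: (a) $A \cap B \neq \emptyset$; (b) $B \cap (C \cup G) \neq \emptyset$; (c) $C \cap F \neq \emptyset$; (d) $D \cap F \neq \emptyset$; (e) $E \cap G \neq \emptyset$; (f) $F\cap G\neq\emptyset$.
   Context: Notation for the rule: the head is the disjunction of the atoms in $A$; the body is the conjunction of the atoms in $B$, the literals $\neg c$ ($c\in C$), the epistemic literals $\mathbf{not}\,d$ ($d\in D$), $\mathbf{not}\,\neg e$ ($e\in E$), and the negated epistemic literals $\neg\mathbf{not}\,f$ ($f\in F$), $\neg\mathbf{not}\,\neg g$ ($g\in G$). Definitions: a literal over atoms $\mathcal{A}$ is $a$ or $\neg a$; interpretations $I\subseteq\mathcal{A}$, $I\models a$ iff $a\in I$, $I\models\neg\ell$ iff $I\not\models\ell$. A plain logic program $(\mathcal{A},\mathcal{R})$ has rules $a_1\vee\cdots\vee a_l\leftarrow a_{l+1},\ldots,a_m,\neg\ell_1,\ldots,\neg\ell_n$; $M\models r$ iff body true implies some head atom in $M$. GL-reduct $\Pi^I$ keeps $H(r)\leftarrow B^+(r)$ (positive body atoms) for rules all of whose negated body elements $\neg\ell$ are true in $I$ ($\neg\neg\neg a$ treated as $\neg a$); answer sets are models $M$ with no $M'\subset M$ modelling $\Pi^M$. An ELP is $(\mathcal{A},\mathcal{E},\mathcal{R})$,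 $\mathcal{E}$ a set of epistemic literals $\mathbf{not}\,\ell$, rules $a_1\vee\cdots\vee a_k\leftarrow\ell_1,\ldots,\ell_m,\xi_1,\ldots,\xi_j,\neg\xi_{j+1},\ldots,\neg\xi_n$ with $\xi_i\in\mathcal{E}$. A guess $\Phi\subseteq\mathcal{E}$; $\mathcal{I}$ is $\Phi$-compatible iff nonempty, each $\mathbf{not}\,\ell\in\Phi$ is falsified ($I\not\models\ell$) by some $I\in\mathcal{I}$, and each $\mathbf{not}\,\ell\in\mathcal{E}\setminus\Phi$ has $\ell$ true in all $I\in\mathcal{I}$. Epistemic reduct $\Pi^\Phi$: replace $\mathbf{not}\,\ell\in\Phi$ by $\top$ and remaining $\mathbf{not}$ by $\neg$. A candidate world view is $AS(\Pi^\Phi)$ when $\Phi$-compatible; a world view is a candidate world view with subset-maximal associated guess. ELPs $\Pi_1,\Pi_2$ are strongly equivalent iff for every ELP $\Pi$, $\Pi_1\cup\Pi$ and $\Pi_2\cup\Pi$ (componentwise union) have the same world views. An ELP rule $r$ over $\mathcal{A}$ and $\mathcal{E}$ (containing the atoms and epistemic literals of $r$) is tautological iff $(\mathcal{A},\mathcal{E},\{r\})$ is strongly equivalent to $(\mathcal{A},\mathcal{E},\emptyset)$. *)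

From HB Require Import structures.
From mathcomp Require Import all_boot.
From mathcomp Require Export finmap.
From Stdlib Require Lists.List.

Set Implicit Arguments.
Unset Strict Implicit.
Unset Printing Implicit Defensive.

Local Open Scope fset_scope.

Definition atom := nat.
Definition interp := {fset atom}.

(** A literal: (true, a) is the atom a, (false, a) is the literal ¬a.
    The epistemic literal [not ℓ] is identified with the literal ℓ. *)
Definition lit := (bool * atom)%type.
Definition pos_lit (a : atom) : lit := (true, a).
Definition neg_lit (a : atom) : lit := (false, a).
Definition lit_atom (l : lit) : atom := l.2.
Definition negl (l : lit) : lit := (~~ l.1, l.2).

Definition sat_litb (I : interp) (l : lit) : bool :=
  if l.1 then l.2 \in I else l.2 \notin I.
Definition sat_lit (I : interp) (l : lit) : Prop := sat_litb I l.

(** A plain rule  H <- B+, ¬ℓ_1, ..., ¬ℓ_n : the negated body elements ¬ℓ are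
    stored via ℓ, where ℓ is (true,a) for ¬a and (false,a) for ¬¬a
    (¬¬¬a is treated as ¬a, i.e. stored as (true,a)). *)
Record prule := PRule { phead : {fset atom}; ppos : {fset atom}; pneg : {fset lit} }.

Record plain_program := PProg { patoms : {fset atom}; prules : seq prule }.

Definition pbody_true (I : interp) (r : prule) : Prop :=
  ppos r `<=` I /\ (forall l, l \in pneg r -> ~ sat_lit I l).

Definition sat_prule (I : interp) (r : prule) : Prop :=
  pbody_true I r -> exists2 a, a \in phead r & a \in I.

Definition models (I : interp) (rs : seq prule) : Prop :=
  forall r, List.In r rs -> sat_prule I r.

Definition GL (I : interp) (P : plain_program) : seq prule :=
  [seq PRule (phead r) (ppos r) fset0 |
     r <- prules P & all (fun l => ~~ sat_litb I l) (pneg r)].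

Definition answer_set (P : plain_program) (M : interp) : Prop :=
  M `<=` patoms P /\ models M (GL M P) /\
  (forall M' : interp, M' `<` M -> ~ models M' (GL M P)).

(** An ELP rule  H <- B, ¬C, ξ_1..ξ_j, ¬ξ_{j+1}..¬ξ_n  with
    [epos] the epistemic literals ξ (not ℓ, stored as ℓ) occurring positively
    and [eneg] those occurring under negation. *)
Record erule := ERule {
  ehead : {fset atom};
  ebpos : {fset atom};
  ebneg : {fset atom};   (* body literals ¬a *)
  epos  : {fset lit};
  eneg  : {fset lit}
}.

Record elp := ELP { atoms : {fset atom}; elits : {fset lit}; erules : seq erule }.

Definition erule_atoms (r : erule) : {fset atom} :=
  ehead r `|` ebpos r `|` ebneg r `|` [fset lit_atom l | l in epos r]
  `|` [fset lit_atom l | l in eneg r].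

Definition erule_elits (r : erule) : {fset lit} := epos r `|` eneg r.

Definition wf_elp (P : elp) : Prop :=
  [fset lit_atom l | l in elits P] `<=` atoms P /\
  (forall r, List.In r (erules P) ->
     erule_atoms r `<=` atoms P /\ erule_elits r `<=` elits P).

Definition elp_union (P Q : elp) : elp :=
  ELP (atoms P `|` atoms Q) (elits P `|` elits Q) (erules P ++ erules Q).

(** Epistemic reduct of a rule w.r.t. a guess Phi: not ℓ ∈ Phi becomes ⊤,
    other not ℓ become ¬ℓ.  A body element ¬not ℓ with not ℓ ∈ Phi becomes
    ¬⊤ (false body), so the rule is dropped.  ¬not ℓ with not ℓ ∉ Phi becomes
    ¬¬ℓ, i.e. the negated element ¬(negl ℓ) (using ¬¬¬a = ¬a). *)
Definition ereduct_rule (Phi : {fset lit}) (r : erule) : seq prule :=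
  if eneg r `&` Phi != fset0 then [::]
  else [:: PRule (ehead r) (ebpos r)
            ([fset pos_lit c | c in ebneg r] `|` (epos r `\` Phi)
             `|` [fset negl l | l in eneg r])].

Definition ereduct (P : elp) (Phi : {fset lit}) : plain_program :=
  PProg (atoms P) (flatten [seq ereduct_rule Phi r | r <- erules P]).

Definition compatible (Eps Phi : {fset lit}) (W : interp -> Prop) : Prop :=
  (exists I, W I) /\
  (forall l, l \in Phi -> exists2 I, W I & ~ sat_lit I l) /\
  (forall l, l \in Eps -> l \notin Phi -> forall I, W I -> sat_lit I l).

Definition candidate_guess (P : elp) (Phi : {fset lit}) : Prop :=
  Phi `<=` elits P /\ compatible (elits P) Phi (answer_set (ereduct P Phi)).

Definition world_view (P : elp) (W : interp -> Prop) : Prop :=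
  exists Phi, candidate_guess P Phi /\
    (forall Psi, candidate_guess P Psi -> Phi `<=` Psi -> Psi = Phi) /\
    (forall I, W I <-> answer_set (ereduct P Phi) I).

Definition strongly_equivalent (P1 P2 : elp) : Prop :=
  forall Q : elp, wf_elp Q ->
    forall W : interp -> Prop,
      world_view (elp_union P1 Q) W <-> world_view (elp_union P2 Q) W.

Definition tautological (At : {fset atom}) (Eps : {fset lit}) (r : erule) : Prop :=
  strongly_equivalent (ELP At Eps [:: r]) (ELP At Eps [::]).

(** The rule  A <- B, ¬C, not D, not ¬E, ¬not F, ¬not ¬G *)
Definition mkrule (A B C D E F G : {fset atom}) : erule :=
  ERule A B C
    ([fset pos_lit d | d in D] `|` [fset neg_lit e | e in E])
    ([fset pos_lit f | f in F] `|` [fset neg_lit g | g in G]).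

From mathcomp Require Import all_boot finmap.
From Stdlib Require Import ClassicalEpsilon.

Set Implicit Arguments.
Unset Strict Implicit.
Unset Printing Implicit Defensive.

Local Open Scope fset_scope.

(* If one of (a)-(f) holds then, for every guess, the reduct of the rule is absent, removed by
   the GL reduct, or satisfied by every subset of the interpretation, so adding the rule to a
   program changes none of its answer sets.

   Conversely, assume all six intersections are empty and take fresh atoms q0, q1, q2. The test
   program Q has the fact q0 ∨ q1 ∨ q2, the constraints ← ¬f (f ∈ F) and ← g (g ∈ G), and the
   rules x ← q1 (x ∈ F), x ← q2 (x ∈ F ∪ E), x ← q0 (x ∈ (B ∪ F) \ A) and x ← y (x, y ∈ A ∩ F).
   Its answer sets {q1} ∪ F and {q2} ∪ F ∪ E force every compatible guess to contain the
   literals of not D and not ¬E and to avoid those of ¬not F and ¬not ¬G, so the rule reduces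
   to A ← B, ¬C. Then I = {q0} ∪ B ∪ F is an answer set of Q iff A ∩ F = ∅, but an answer set
   of Q plus the reduced rule iff A ∩ F ≠ ∅: the rule changes the world view of Q. *)

Lemma InP (T : eqType) (x : T) (s : seq T) : List.In x s <-> x \in s.
Proof.
elim: s => [|y s IHs] //=; rewrite inE.
by split=> [[->|/IHs->]|/orP[/eqP->|/IHs]]; rewrite ?eqxx ?orbT; auto.
Qed.

Lemma models_cat (I : interp) (s1 s2 : seq prule) :
  models I (s1 ++ s2) <-> models I s1 /\ models I s2.
Proof.
rewrite /models; split=> [Hs|[Hs1 Hs2] r].
  by split=> r Hr; apply: Hs; apply: List.in_or_app; [left|right].
by case/(List.in_app_or s1 s2 r); [apply: Hs1|apply: Hs2].
Qed.

Lemma GL_cat (I : interp) (X : {fset atom}) (s1 s2 : seq prule) :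
  GL I (PProg X (s1 ++ s2)) = GL I (PProg X s1) ++ GL I (PProg X s2).
Proof. by rewrite /GL filter_cat map_cat. Qed.

Lemma sat_negl (I : interp) (l : lit) : sat_litb I (negl l) = ~~ sat_litb I l.
Proof. by case: l => [[] a]; rewrite /sat_litb /negl /= ?negbK. Qed.

Lemma in_pos_neg_lits (X Y : {fset atom}) (l : lit) :
  (l \in [fset pos_lit x | x in X] `|` [fset neg_lit y | y in Y]) =
  if l.1 then l.2 \in X else l.2 \in Y.
Proof.
case: l => [[] a] /=; rewrite in_fsetU;
  apply/orP/idP => [[]/imfsetP[x /= xX /pair_equal_spec[//= _ ->]]|aXY] //.
  by left; rewrite (in_imfset _ pos_lit).
by right; rewrite (in_imfset _ neg_lit).
Qed.

(* The reduct of [r] at the guess [Phi] exists and is kept by the GL reduct at [M]. *)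
Definition reduct_applies (Phi : {fset lit}) (M : interp) (r : erule) : Prop :=
  [/\ [disjoint eneg r & Phi], {in ebneg r, forall c, c \notin M},
      {in epos r `\` Phi, forall l, ~~ sat_litb M l} &
      {in eneg r, forall l, sat_litb M l}].

Definition reduct_sat (Phi : {fset lit}) (M M' : interp) (r : erule) : Prop :=
  reduct_applies Phi M r -> ebpos r `<=` M' -> exists2 a, a \in ehead r & a \in M'.

Lemma reduct_negs_unsatP (M : interp) (C : {fset atom}) (P N : {fset lit}) :
  reflect [/\ {in C, forall c, c \notin M}, {in P, forall l, ~~ sat_litb M l} &
              {in N, forall l, sat_litb M l}]
    (all (fun l => ~~ sat_litb M l)
       ([fset pos_lit c | c in C] `|` P `|` [fset negl l | l in N])).
Proof.
apply: (iffP allP) => [unsat|[CM PM NM] l].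
  split=> [c cC|l lP|l lN].
  - by apply: (unsat (pos_lit c)); rewrite !in_fsetU (in_imfset _ pos_lit).
  - by apply: unsat; rewrite !in_fsetU lP orbT.
  - rewrite -[sat_litb M l]negbK -sat_negl; apply: unsat.
    by rewrite !in_fsetU (in_imfset _ negl) ?orbT.
rewrite !in_fsetU => /orP[/orP[/imfsetP[c /= cC ->]|/PM //]|/imfsetP[l' /= l'N ->]].
  exact: CM.
by rewrite sat_negl negbK NM.
Qed.

Lemma models_GL_ereduct_rule (Phi : {fset lit}) (M M' : interp) (X : {fset atom})
    (r : erule) :
  models M' (GL M (PProg X (ereduct_rule Phi r))) <-> reduct_sat Phi M M' r.
Proof.
rewrite /ereduct_rule /reduct_sat /reduct_applies.
case: ifP => [/negP Phi_r|/negbFE Phi_r]; first by split=> // _ [].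
rewrite /GL /=; case: reduct_negs_unsatP => [[CM PM NM]|unsat] /=; last first.
  by split=> // _ [Phi_r' CM PM NM]; case: unsat.
split=> [Hr _ Hb|Hr _ [<-|[]] [Hb _]]; last exact: Hr.
by apply: (Hr _ (or_introl erefl)); split=> // l; rewrite in_fset0.
Qed.

Definition reduct_model (P : elp) (Phi : {fset lit}) (M M' : interp) : Prop :=
  forall r, List.In r (erules P) -> reduct_sat Phi M M' r.

Lemma models_GL_ereduct (P : elp) (Phi : {fset lit}) (M M' : interp) :
  models M' (GL M (ereduct P Phi)) <-> reduct_model P Phi M M'.
Proof.
rewrite /ereduct /reduct_model; elim: (erules P) => [|r rs IHrs] /=.
  by split=> // _ r [].
rewrite GL_cat models_cat models_GL_ereduct_rule IHrs.
by split=> [[Hr Hrs] r' [<-|]|Hrs]; auto.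
Qed.

Lemma answer_set_ereduct (P : elp) (Phi : {fset lit}) (M : interp) :
  answer_set (ereduct P Phi) M <->
  [/\ M `<=` atoms P, reduct_model P Phi M M &
      forall M', M' `<=` M -> reduct_model P Phi M M' -> M `<=` M'].
Proof.
rewrite /answer_set models_GL_ereduct.
split=> [[MP [HM Hmin]]|[MP HM Hmin]]; split=> //.
  move=> M' M'M /models_GL_ereduct HM'; apply/negPn/negP => MM'.
  by apply: (Hmin M') => //; rewrite fproperE M'M.
split=> // M'; rewrite fproperE => /andP[M'M MM'] /models_GL_ereduct HM'.
by move: MM'; rewrite Hmin.
Qed.

Lemma reduct_model_union (P Q : elp) (Phi : {fset lit}) (M M' : interp) :
  reduct_model (elp_union P Q) Phi M M' <->
  reduct_model P Phi M M' /\ reduct_model Q Phi M M'.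
Proof.
rewrite /reduct_model /=; split=> [HPQ|[HP HQ] r].
  by split=> r Hr; apply: HPQ; apply: List.in_or_app; auto.
by case/(List.in_app_or (erules P) (erules Q) r); auto.
Qed.

Lemma reduct_model1 (X : {fset atom}) (Eps : {fset lit}) (r : erule) (Phi : {fset lit})
    (M M' : interp) :
  reduct_model (ELP X Eps [:: r]) Phi M M' <-> reduct_sat Phi M M' r.
Proof. by split=> [|Hr r' [<-|[]]] //; apply; left. Qed.

Lemma answer_set_union_redundant (P P' Q : elp) (Phi : {fset lit}) (M : interp) :
  atoms P = atoms P' ->
  (forall M', M' `<=` M -> reduct_model P Phi M M' /\ reduct_model P' Phi M M') ->
  answer_set (ereduct (elp_union P Q) Phi) M <->
  answer_set (ereduct (elp_union P' Q) Phi) M.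
Proof.
move=> eqPP' HPP'; rewrite !answer_set_ereduct /= eqPP'.
have eqQ M' : M' `<=` M -> reduct_model (elp_union P Q) Phi M M' <->
                          reduct_model (elp_union P' Q) Phi M M'.
  by move=> /HPP'[HP HP']; rewrite !reduct_model_union; tauto.
have MM := fsubset_refl M.
by split=> -[MPQ HM Hmin]; split=> // [|M' M'M /(eqQ M' M'M)];
  [apply/eqQ|apply: Hmin|apply/eqQ|apply: Hmin].
Qed.

Lemma compatible_ext (Eps Phi : {fset lit}) (W W' : interp -> Prop) :
  (forall I, W I <-> W' I) -> compatible Eps Phi W -> compatible Eps Phi W'.
Proof.
move=> eqW [[I WI] [Phi_ex Eps_all]]; split; first by exists I; apply/eqW.
split=> [l /Phi_ex[J WJ Jl]|l lEps lPhi J /eqW]; last exact: Eps_all.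
by exists J; first apply/eqW.
Qed.

Lemma world_view_ext (P P' : elp) (W : interp -> Prop) :
  elits P = elits P' ->
  (forall Phi M, answer_set (ereduct P Phi) M <-> answer_set (ereduct P' Phi) M) ->
  world_view P W -> world_view P' W.
Proof.
move=> eqE eqAS [Phi [[PhiE Phi_c] [Phi_max eqW]]].
have guess_eq Psi : candidate_guess P' Psi <-> candidate_guess P Psi.
  rewrite /candidate_guess eqE.
  by split=> -[PsiE Psi_c]; split=> //; apply: compatible_ext Psi_c => I; rewrite eqAS.
exists Phi; split; first by apply/guess_eq.
by split=> [Psi /guess_eq|I]; [apply: Phi_max|rewrite eqW eqAS].
Qed.

Definition classic_bool (p : Prop) : bool :=
  if excluded_middle_informative p then true else false.

Lemma classic_boolP (p : Prop) : reflect p (classic_bool p).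
Proof. by rewrite /classic_bool; case: (excluded_middle_informative p); constructor. Qed.

Definition guess_of (Eps : {fset lit}) (W : interp -> Prop) : {fset lit} :=
  [fset l in Eps | classic_bool (exists2 I, W I & ~ sat_lit I l)].

Lemma compatible_guess_of (Eps : {fset lit}) (W : interp -> Prop) :
  (exists I, W I) -> compatible Eps (guess_of Eps W) W.
Proof.
move=> W_ne; split=> //; split=> [l|l lEps].
  by rewrite !inE => /andP[_ /classic_boolP].
rewrite !inE lEps => /classic_boolP W_l I WI.
by apply/negPn/negP => Il; apply: W_l; exists I => //; apply/negP.
Qed.

Lemma compatible_guess_unique (Eps Phi : {fset lit}) (W : interp -> Prop) :
  Phi `<=` Eps -> compatible Eps Phi W -> Phi = guess_of Eps W.
Proof.
move=> PhiE [_ [Phi_ex Eps_all]]; apply/fsetP => l; rewrite !inE.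
have [lPhi|lPhi] := boolP (l \in Phi).
  by rewrite (fsubsetP PhiE) //=; apply/esym/classic_boolP/Phi_ex.
apply/esym/negbTE; rewrite negb_and; case lEps: (l \in Eps) => //=.
by apply/classic_boolP => -[I WI]; apply; apply: Eps_all.
Qed.

Lemma world_view_guess_independent (P : elp) (S : interp -> Prop) :
  (exists I, S I) -> (forall Phi I, answer_set (ereduct P Phi) I <-> S I) ->
  world_view P S.
Proof.
move=> S_ne eqS.
have compat Phi : compatible (elits P) Phi (answer_set (ereduct P Phi)) <->
                  compatible (elits P) Phi S.
  by split; apply: compatible_ext => I; rewrite eqS.
exists (guess_of (elits P) S); split; last split.
- split; first by apply/fsubsetP => l; rewrite !inE => /andP[].
  by apply/compat/compatible_guess_of.
- by move=> Psi [PsiE /compat /(compatible_guess_unique PsiE)].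
- by move=> I; rewrite eqS.
Qed.

Lemma tautological_of_reduct_sat (At : {fset atom}) (Eps : {fset lit}) (r : erule) :
  (forall Phi M M', M' `<=` M -> reduct_sat Phi M M' r) -> tautological At Eps r.
Proof.
move=> r_sat Q _ W.
have eqAS Phi M : answer_set (ereduct (elp_union (ELP At Eps [:: r]) Q) Phi) M <->
                  answer_set (ereduct (elp_union (ELP At Eps [::]) Q) Phi) M.
  by apply: answer_set_union_redundant => // M' M'M; rewrite reduct_model1; split; auto.
by split; apply: world_view_ext => // Phi M; rewrite eqAS.
Qed.

Definition rule_conflict (A B C D E F G : {fset atom}) : Prop :=
  A `&` B != fset0 \/ B `&` (C `|` G) != fset0 \/ C `&` F != fset0 \/
  D `&` F != fset0 \/ E `&` G != fset0 \/ F `&` G != fset0.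

Lemma mkrule_reduct_sat (A B C D E F G : {fset atom}) (Phi : {fset lit}) (M M' : interp) :
  rule_conflict A B C D E F G -> M' `<=` M -> reduct_sat Phi M M' (mkrule A B C D E F G).
Proof.
move=> conflict M'M [/= /fdisjointP negPhi CM posM negM] BM'.
have FM f : f \in F -> f \in M.
  by move=> fF; have := negM (pos_lit f); rewrite in_pos_neg_lits; apply.
have GM g : g \in G -> g \notin M.
  by move=> gG; have := negM (neg_lit g); rewrite in_pos_neg_lits; apply.
have posM' l : l \in epos (mkrule A B C D E F G) -> l \in eneg (mkrule A B C D E F G) ->
               ~~ sat_litb M l.
  by move=> lpos lneg; apply: posM; rewrite in_fsetD lpos negPhi.
have BM x : x \in B -> x \in M by move=> /(fsubsetP BM') /(fsubsetP M'M).
case: conflict => [|[|[|[|[|]]]]] /fset0Pn[x]; rewrite !inE.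
- by case/andP=> xA /(fsubsetP BM') xM'; exists x.
- by case/andP=> /BM xM /orP[/CM|/GM]; rewrite xM.
- by case/andP=> /CM xM /FM; rewrite (negbTE xM).
- case/andP=> xD xF; have := posM' (pos_lit x).
  by rewrite /= !in_pos_neg_lits /sat_litb /= FM // => /(_ xD xF).
- case/andP=> xE xG; have := posM' (neg_lit x).
  by rewrite /= !in_pos_neg_lits /sat_litb /= negbK (negbTE (GM x xG)) => /(_ xE xG).
- by case/andP=> /FM xM /GM; rewrite xM.
Qed.

Definition plain_rule (H B C : {fset atom}) : erule := ERule H B C fset0 fset0.
Definition imp_rule (p : atom * atom) : erule := plain_rule [fset p.1] [fset p.2] fset0.
Definition require_rule (f : atom) : erule := plain_rule fset0 fset0 [fset f].
Definition forbid_rule (g : atom) : erule := plain_rule fset0 [fset g] fset0.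

Definition test_rules (H : {fset atom}) (Pairs : {fset atom * atom}) (F G : {fset atom}) :
    seq erule :=
  plain_rule H fset0 fset0 :: [seq imp_rule p | p <- Pairs] ++
  [seq require_rule f | f <- F] ++ [seq forbid_rule g | g <- G].

Definition test_elp (U H : {fset atom}) (Pairs : {fset atom * atom}) (F G : {fset atom}) : elp :=
  ELP U fset0 (test_rules H Pairs F G).

Definition test_model (H : {fset atom}) (Pairs : {fset atom * atom}) (F G : {fset atom})
    (M M' : interp) : Prop :=
  [/\ exists2 h, h \in H & h \in M', {in Pairs, forall p, p.2 \in M' -> p.1 \in M'},
      F `<=` M & [disjoint M' & G]%fset].

Lemma reduct_sat_plain (Phi : {fset lit}) (M M' : interp) (H B C : {fset atom}) :
  reduct_sat Phi M M' (plain_rule H B C) <->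
  ({in C, forall c, c \notin M} -> B `<=` M' -> exists2 a, a \in H & a \in M').
Proof.
split=> [Hr CM BM'|Hr [_ CM _ _]]; last exact: Hr.
apply: Hr BM'; split=> //= [|l]; first exact: fdisjoint0X.
by rewrite fset0D in_fset0.
Qed.

Lemma In_map_forall (T : choiceType) (V : Type) (f : T -> V) (s : {fset T})
    (P : V -> Prop) :
  (forall r, List.In r [seq f x | x <- s] -> P r) <-> {in s, forall x, P (f x)}.
Proof.
split=> [Hs x /InP xs|Hs r /List.in_map_iff[x [<- /InP]]]; last exact: Hs.
by apply: Hs; apply: List.in_map.
Qed.

Lemma forall_test_rules (H : {fset atom}) (Pairs : {fset atom * atom}) (F G : {fset atom})
    (P : erule -> Prop) :
  (forall r, List.In r (test_rules H Pairs F G) -> P r) <->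
  [/\ P (plain_rule H fset0 fset0), {in Pairs, forall p, P (imp_rule p)},
      {in F, forall f, P (require_rule f)} & {in G, forall g, P (forbid_rule g)}].
Proof.
rewrite /test_rules; split=> [Hs|[H0 Hp HF HG] r].
  split; first by apply: Hs; left.
  - apply/(In_map_forall imp_rule) => r Hr; apply: Hs.
    by rewrite /= !List.in_app_iff; tauto.
  - apply/(In_map_forall require_rule) => r Hr; apply: Hs.
    by rewrite /= !List.in_app_iff; tauto.
  - apply/(In_map_forall forbid_rule) => r Hr; apply: Hs.
    by rewrite /= !List.in_app_iff; tauto.
rewrite /= !List.in_app_iff => -[<-|[|[]]] //.
- exact: (iffRL (In_map_forall imp_rule Pairs P)).
- exact: (iffRL (In_map_forall require_rule F P)).
- exact: (iffRL (In_map_forall forbid_rule G P)).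
Qed.

Section PlainRules.

Variables (Phi : {fset lit}) (M M' : interp).

Lemma reduct_sat_choice (H : {fset atom}) :
  reduct_sat Phi M M' (plain_rule H fset0 fset0) <-> exists2 h, h \in H & h \in M'.
Proof. by rewrite reduct_sat_plain; split=> [|HM' _ _ //]; apply=> [c|]; rewrite ?inE. Qed.

Lemma reduct_sat_imp (p : atom * atom) :
  reduct_sat Phi M M' (imp_rule p) <-> (p.2 \in M' -> p.1 \in M').
Proof.
rewrite reduct_sat_plain fsub1set; split=> [Hr p2M'|Hr _ /Hr]; last by exists p.1; rewrite ?inE.
by have [|a /fset1P->] := Hr _ p2M'; rewrite ?inE.
Qed.

Lemma reduct_sat_require (f : atom) : reduct_sat Phi M M' (require_rule f) <-> f \in M.
Proof.
rewrite reduct_sat_plain; split=> [Hr|fM fM' _].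
  apply/negPn/negP => fM; have [c /fset1P-> //|a] := Hr _ (fsub0set M').
  by rewrite in_fset0.
by have := fM' f (fset11 f); rewrite fM.
Qed.

Lemma reduct_sat_forbid (g : atom) : reduct_sat Phi M M' (forbid_rule g) <-> g \notin M'.
Proof.
rewrite reduct_sat_plain fsub1set; split=> [Hr|gM' _ gM'']; last by rewrite gM'' in gM'.
by apply/negP => /(Hr _) []; rewrite ?inE.
Qed.

End PlainRules.

Lemma reduct_model_test (U H : {fset atom}) (Pairs : {fset atom * atom}) (F G : {fset atom})
    (Phi : {fset lit}) (M M' : interp) :
  reduct_model (test_elp U H Pairs F G) Phi M M' <-> test_model H Pairs F G M M'.
Proof.
rewrite /reduct_model forall_test_rules.
split=> [[/reduct_sat_choice HM' Hp HF HG]|[HM' Hp HF HG]].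
  split=> [//|p /Hp /reduct_sat_imp //||].
    by apply/fsubsetP => f /HF /reduct_sat_require.
  by apply/fdisjointP_sym => g /HG /reduct_sat_forbid.
split=> [|p pP|f fF|g gG] /=.
- exact/reduct_sat_choice.
- exact/reduct_sat_imp/Hp.
- exact/reduct_sat_require/(fsubsetP HF).
- exact/reduct_sat_forbid/(fdisjointP_sym HG).
Qed.

Lemma erule_atoms_plain (H B C : {fset atom}) :
  erule_atoms (plain_rule H B C) = H `|` B `|` C.
Proof. by rewrite /erule_atoms /= !imfset0 !fsetU0. Qed.

Lemma wf_test_elp (U H : {fset atom}) (Pairs : {fset atom * atom}) (F G : {fset atom}) :
  H `<=` U -> F `<=` U -> G `<=` U -> {in Pairs, forall p, (p.1 \in U) && (p.2 \in U)} ->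
  wf_elp (test_elp U H Pairs F G).
Proof.
move=> HU FU GU PairsU; split; first by rewrite imfset0 fsub0set.
have plain_wf h b c : h `|` b `|` c `<=` U ->
    erule_atoms (plain_rule h b c) `<=` U /\ erule_elits (plain_rule h b c) `<=` fset0.
  by rewrite erule_atoms_plain /erule_elits fsetU0.
apply/forall_test_rules;
  split=> [|p /PairsU/andP[p1U p2U]|f /(fsubsetP FU) fU|g /(fsubsetP GU) gU] /=;
  by apply: plain_wf; rewrite !fsubUset ?fsub1set ?fsub0set ?HU ?p1U ?p2U ?fU ?gU.
Qed.

Lemma in_fsetU_forall (T : choiceType) (X Y : {fset T}) (P : T -> Prop) :
  {in X `|` Y, forall x, P x} <-> {in X, forall x, P x} /\ {in Y, forall x, P x}.
Proof.
split=> [XY|[HX HY] x]; last by rewrite in_fsetU => /orP[/HX|/HY].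
by split=> x xX; apply: XY; rewrite in_fsetU xX ?orbT.
Qed.

Lemma closed_fsetM (X Y : {fset atom}) (M : interp) :
  {in X `*` Y, forall p, p.2 \in M -> p.1 \in M} <-> {in Y, forall y, y \in M -> X `<=` M}.
Proof.
split=> [XY y yY yM|HY [x y]]; last by rewrite in_fsetM => /andP[xX /HY YM /YM/fsubsetP->].
by apply/fsubsetP => x xX; apply: (XY (x, y)); rewrite // in_fsetM xX.
Qed.

Lemma in_fset1_forall (T : choiceType) (a : T) (P : T -> Prop) :
  {in [fset a], forall x, P x} <-> P a.
Proof. by split=> [|Pa x /fset1P->//]; apply; rewrite fset11. Qed.

Lemma test_model_choice (H : {fset atom}) (Pairs : {fset atom * atom}) (F G : {fset atom})
    (M M' J : interp) (q : atom) :
  M' `<=` J -> H `&` J `<=` [fset q] -> test_model H Pairs F G M M' -> q \in M'.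
Proof.
move=> M'J HJq [[h hH hM'] _ _ _].
suff <- : h = q by [].
by apply/fset1P/(fsubsetP HJq); rewrite in_fsetI hH (fsubsetP M'J).
Qed.

Lemma answer_set_union_test (At : {fset atom}) (Eps : {fset lit}) (rs : seq erule)
    (U H : {fset atom}) (Pairs : {fset atom * atom}) (F G : {fset atom}) (Phi : {fset lit})
    (M : interp) :
  answer_set (ereduct (elp_union (ELP At Eps rs) (test_elp U H Pairs F G)) Phi) M <->
  [/\ M `<=` At `|` U,
      reduct_model (ELP At Eps rs) Phi M M /\ test_model H Pairs F G M M &
      forall M', M' `<=` M ->
        reduct_model (ELP At Eps rs) Phi M M' /\ test_model H Pairs F G M M' -> M `<=` M'].
Proof.
have eqm M' : reduct_model (elp_union (ELP At Eps rs) (test_elp U H Pairs F G)) Phi M M' <->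
              reduct_model (ELP At Eps rs) Phi M M' /\ test_model H Pairs F G M M'.
  by rewrite reduct_model_union reduct_model_test.
rewrite answer_set_ereduct.
by split=> -[MU /eqm HM Hmin]; split=> // M' M'M /eqm; apply: Hmin.
Qed.

Lemma mkrule_eneg_sat (A B C D E F G : {fset atom}) (M : interp) :
  F `<=` M -> [disjoint M & G]%fset ->
  {in eneg (mkrule A B C D E F G), forall l, sat_litb M l}.
Proof.
move=> /fsubsetP FM /fdisjointP_sym MG [[] a]; rewrite /= in_pos_neg_lits /sat_litb /=.
  exact: FM.
exact: MG.
Qed.

Lemma fresh_atoms (X : {fset atom}) :
  exists q0 q1 q2 : atom, uniq [:: q0; q1; q2] /\ [disjoint [fset q0; q1; q2] & X]%fset.
Proof.
pose n := (\max_(x <- X) x).+1.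
have Xn x : x \in X -> x < n by move=> xX; rewrite ltnS; apply: leq_bigmax_seq.
exists n, n.+1, n.+2; split.
  by rewrite /= !inE !ltn_eqF.
apply/fdisjointP => a aq; apply: contraTN aq => /Xn an.
by rewrite !inE !ltn_eqF // (ltn_trans an) ?leqnSn.
Qed.

Section NonTautological.

Variables (A B C D E F G At : {fset atom}) (Eps : {fset lit}) (q0 q1 q2 : atom).

Hypotheses (AB : [disjoint A & B]%fset) (BC : [disjoint B & C]%fset)
  (BG : [disjoint B & G]%fset) (CF : [disjoint C & F]%fset) (DF : [disjoint D & F]%fset)
  (EG : [disjoint E & G]%fset) (FG : [disjoint F & G]%fset).

Hypothesis q_uniq : uniq [:: q0; q1; q2].
Hypothesis q_fresh :
  [disjoint [fset q0; q1; q2] & A `|` B `|` C `|` D `|` E `|` F `|` G]%fset.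

Hypothesis epos_Eps : epos (mkrule A B C D E F G) `<=` Eps.

Lemma freshE :
  ((q0 == q1) = false) * ((q0 == q2) = false) * ((q1 == q0) = false) *
  ((q1 == q2) = false) * ((q2 == q0) = false) * ((q2 == q1) = false) *
  ((q0 \in A) = false) * ((q0 \in B) = false) * ((q0 \in C) = false) *
  ((q0 \in D) = false) * ((q0 \in E) = false) * ((q0 \in F) = false) *
  ((q0 \in G) = false) * ((q1 \in A) = false) * ((q1 \in B) = false) *
  ((q1 \in C) = false) * ((q1 \in D) = false) * ((q1 \in E) = false) *
  ((q1 \in F) = false) * ((q1 \in G) = false) * ((q2 \in A) = false) *
  ((q2 \in B) = false) * ((q2 \in C) = false) * ((q2 \in D) = false) *
  ((q2 \in E) = false) * ((q2 \in F) = false) * ((q2 \in G) = false).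
Proof.
move: q_uniq; rewrite /= !inE !negb_or.
case/and3P=> /andP[/negbTE q01 /negbTE q02] /negbTE q12 _.
have qX q Y : q \in [fset q0; q1; q2] -> Y `<=` A `|` B `|` C `|` D `|` E `|` F `|` G ->
    (q \in Y) = false.
  move=> qH /fsubsetP YX; apply/negbTE/negP => /YX; apply/negP.
  by move/fdisjointP: q_fresh; apply.
do !split; try by rewrite // eq_sym.
all: apply: qX;
  rewrite ?inE ?eqxx ?orbT //; apply/fsubsetP => x xY; by rewrite !inE xY /= ?orbT.
Qed.

Let r := mkrule A B C D E F G.
Let H := [fset q0; q1; q2].
Let Pairs := ((B `|` F) `\` A) `*` [fset q0] `|` F `*` [fset q1] `|` (F `|` E) `*` [fset q2]
             `|` (A `&` F) `*` (A `&` F).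
Let U := H `|` B `|` E `|` F `|` G.
Let Q := test_elp U H Pairs F G.
Let Q_model := test_model H Pairs F G.

Let J1 := q1 |` F.
Let J2 := q2 |` (F `|` E).
Let I := q0 |` (B `|` F).
Let I' := q0 |` ((B `|` F) `\` A).

Let Q_answer (M : interp) : Prop :=
  [/\ M `<=` At `|` U, Q_model M M & forall M', M' `<=` M -> Q_model M M' -> M `<=` M'].

Lemma closed_Pairs (M : interp) :
  {in Pairs, forall p, p.2 \in M -> p.1 \in M} <->
  [/\ q0 \in M -> (B `|` F) `\` A `<=` M, q1 \in M -> F `<=` M,
      q2 \in M -> F `|` E `<=` M & {in A `&` F, forall k, k \in M -> A `&` F `<=` M}].
Proof.
rewrite !in_fsetU_forall !closed_fsetM !in_fset1_forall.
by split=> [[[[]]]|[]]; auto.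
Qed.

Lemma wf_Q : wf_elp Q.
Proof.
have HU x : x \in H -> x \in U by rewrite !inE => /orP[/orP[]|] ->; rewrite /= ?orbT.
have [FU GU] : F `<=` U /\ G `<=` U.
  by split; apply/fsubsetP => x xY; rewrite !inE xY /= ?orbT.
apply: wf_test_elp => //; first exact/fsubsetP.
case=> x y; rewrite !inE /= => /orP[/orP[/orP[]|]|].
- by case/andP=> /andP[_ /orP[]->] /eqP->; rewrite eqxx /= ?(orbT, orTb).
- by case/andP=> -> /eqP->; rewrite eqxx /= ?(orbT, orTb).
- by case/andP=> /orP[]-> /eqP->; rewrite eqxx /= ?(orbT, orTb).
- by case/and3P=> /andP[_ ->] _ ->; rewrite /= ?(orbT, orTb).
Qed.

Let P0 := elp_union (ELP At Eps [::]) Q.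
Let P1 := elp_union (ELP At Eps [:: r]) Q.

Lemma answer_set_P0 (Phi : {fset lit}) (M : interp) :
  answer_set (ereduct P0 Phi) M <-> Q_answer M.
Proof.
have nil_model M' : reduct_model (ELP At Eps [::]) Phi M M' by move=> ? [].
rewrite answer_set_union_test.
split=> [[MU [_ HM] Hmin]|[MU HM Hmin]]; split=> // M' M'M.
  by move=> HM'; apply: Hmin.
by case=> _; apply: Hmin.
Qed.

Lemma answer_set_P1 (Phi : {fset lit}) (M : interp) :
  answer_set (ereduct P1 Phi) M <->
  [/\ M `<=` At `|` U, reduct_sat Phi M M r /\ Q_model M M &
      forall M', M' `<=` M -> reduct_sat Phi M M' r /\ Q_model M M' -> M `<=` M'].
Proof.
rewrite answer_set_union_test.
split=> -[MU [/reduct_model1 rM HM] Hmin]; split=> // M' M'M [/reduct_model1 rM' HM'];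
  exact: Hmin.
Qed.

Lemma Q_answer_J1 : Q_answer J1.
Proof.
have HJ1_sub_q1 : H `&` J1 `<=` [fset q1].
  by apply/fsubsetP => x; rewrite !inE => /andP[/orP[/orP[]|] /eqP->]; rewrite ?freshE.
split=> [|| M' M'J tM'].
- by apply/fsubsetP => x; rewrite !inE => /orP[/eqP->|->]; rewrite ?eqxx /= ?(orbT, orTb).
- split=> [|||]; first by exists q1; rewrite !inE ?eqxx ?orbT.
  + apply/closed_Pairs; rewrite !inE !freshE eqxx /=; split=> // [_|k].
      exact: fsubsetU1.
    by move=> _ _; apply: fsubset_trans (fsubsetIr A F) (fsubsetU1 _ _).
  + exact: fsubsetU1.
  + by rewrite fdisjointU1X freshE FG.
- have q1M' := test_model_choice M'J HJ1_sub_q1 tM'.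
  have [_ /closed_Pairs[_ FM' _ _] _ _] := tM'.
  by rewrite fsubUset fsub1set q1M' FM'.
Qed.

Lemma Q_answer_J2 : Q_answer J2.
Proof.
have HJ2_sub_q2 : H `&` J2 `<=` [fset q2].
  by apply/fsubsetP => x; rewrite !inE => /andP[/orP[/orP[]|] /eqP->]; rewrite ?freshE.
have F_sub_J2 : F `<=` J2 by apply: fsubset_trans (fsubsetUl F E) (fsubsetU1 _ _).
split=> [|| M' M'J tM'].
- apply/fsubsetP => x; rewrite !inE => /orP[/eqP->|/orP[]->];
    by rewrite ?eqxx /= ?(orbT, orTb).
- split=> [||//|]; first by exists q2; rewrite !inE ?eqxx ?orbT.
  + apply/closed_Pairs; rewrite !inE !freshE eqxx /=; split=> // [_|k _ _].
      exact: fsubsetU1.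
    exact: fsubset_trans (fsubsetIr A F) F_sub_J2.
  + by rewrite fdisjointU1X fdisjointUX freshE FG EG.
- have q2M' := test_model_choice M'J HJ2_sub_q2 tM'.
  have [_ /closed_Pairs[_ _ FEM' _] _ _] := tM'.
  by rewrite fsubUset fsub1set q2M' FEM'.
Qed.

Lemma I_sub_atoms : I `<=` At `|` U.
Proof.
apply/fsubsetP => x; rewrite !inE => /orP[/eqP->|/orP[]->];
  by rewrite ?eqxx /= ?(orbT, orTb).
Qed.

Lemma HI_sub_q0 : H `&` I `<=` [fset q0].
Proof.
by apply/fsubsetP => x; rewrite !inE => /andP[/orP[/orP[]|] /eqP->]; rewrite ?freshE.
Qed.

Lemma B_sub_I : B `<=` I.
Proof. exact: fsubset_trans (fsubsetUl B F) (fsubsetU1 _ _). Qed.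

Lemma F_sub_I : F `<=` I.
Proof. exact: fsubset_trans (fsubsetUr B F) (fsubsetU1 _ _). Qed.

Lemma Q_model_I : Q_model I I.
Proof.
split; [by exists q0; rewrite !inE eqxx | | exact: F_sub_I | ].
  apply/closed_Pairs; rewrite !inE !freshE eqxx /=; split=> // [_|k _ _].
    exact: fsubset_trans (fsubsetDl _ _) (fsubsetU1 _ _).
  exact: fsubset_trans (fsubsetIr A F) F_sub_I.
by rewrite fdisjointU1X fdisjointUX freshE BG FG.
Qed.

Lemma mem_A_I (a : atom) : a \in A -> a \in I -> a \in F.
Proof.
move=> aA; rewrite !inE => /orP[/eqP aq0|/orP[aB|//]]; first by rewrite aq0 freshE in aA.
by move/fdisjointP: AB => /(_ a aA); rewrite aB.
Qed.

Lemma A_notin_I' (a : atom) : a \in A -> a \notin I'.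
Proof. by move=> aA; rewrite !inE aA /= orbF; apply: contraTN aA => /eqP->; rewrite freshE. Qed.

Lemma Q_model_I' : Q_model I I'.
Proof.
split; [by exists q0; rewrite !inE eqxx | | exact: F_sub_I | ].
  apply/closed_Pairs; rewrite !inE !freshE eqxx /=; split=> // [_|k].
    exact: fsubsetU1.
  by move=> /(fsubsetP (fsubsetIl A F)) /A_notin_I' /negbTE->.
rewrite fdisjointU1X freshE /=.
by apply: fdisjointWl (fsubsetDl _ _) _; rewrite fdisjointUX BG FG.
Qed.

Lemma Q_answer_I : Q_answer I <-> [disjoint A & F]%fset.
Proof.
split=> [[_ _ Hmin]|AF].
  have /fsubsetP II' := Hmin I' (fsetUS _ (fsubsetDl _ _)) Q_model_I'.
  apply/fdisjointP => k kA; move: (A_notin_I' kA); apply: contra.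
  by move=> /(fsubsetP F_sub_I) /II'.
split=> [||M' M'I tM']; [exact: I_sub_atoms|exact: Q_model_I|].
have q0M' := test_model_choice M'I HI_sub_q0 tM'.
have [_ /closed_Pairs[BFM' _ _ _] _ _] := tM'.
have /fsetDidPl BF_A : [disjoint B `|` F & A]%fset.
  by rewrite fdisjointUX fdisjoint_sym AB fdisjoint_sym AF.
by rewrite fsubUset fsub1set q0M' -BF_A BFM'.
Qed.

Lemma P1_answer_I (Psi : {fset lit}) :
  reduct_applies Psi I r -> answer_set (ereduct P1 Psi) I <-> ~ [disjoint A & F]%fset.
Proof.
move=> rI; rewrite answer_set_P1.
split=> [[_ [/(_ rI B_sub_I) [a aA aI] _] _]|].
  by move=> /fdisjointP /(_ a aA); rewrite (mem_A_I aA aI).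
move/negP; rewrite -fsetI_eq0 => /fset0Pn[k]; rewrite in_fsetI => /andP[kA kF].
split=> [|| M' M'I [rM' tM']]; first exact: I_sub_atoms.
  by split=> [_ _|]; [exists k; rewrite // !inE kF !orbT|exact: Q_model_I].
have q0M' := test_model_choice M'I HI_sub_q0 tM'.
have [_ /closed_Pairs[BFM' _ _ AFM'] _ _] := tM'.
have BM' : B `<=` M'.
  apply/fsubsetP => b bB; apply: (fsubsetP (BFM' q0M')).
  by rewrite !inE bB /= andbT; move/fdisjointP_sym: AB; apply.
have [a aA aM'] := rM' rI BM'.
have aAF : a \in A `&` F by rewrite in_fsetI aA (mem_A_I aA (fsubsetP M'I a aM')).
have /fsubsetP AFM := AFM' a aAF aM'.
apply/fsubsetP => x; rewrite !inE => /orP[/eqP->//|xBF].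
have [xA|xA] := boolP (x \in A).
  by apply: AFM; rewrite in_fsetI xA; apply: mem_A_I; rewrite // !inE xBF orbT.
by apply: (fsubsetP (BFM' q0M')); rewrite !inE xA.
Qed.

Lemma compatible_reduct_applies (Psi : {fset lit}) :
  compatible (Eps `|` fset0) Psi Q_answer -> reduct_applies Psi I r.
Proof.
move=> [_ [Psi_ex Eps_all]].
have [_ _ _ IG] := Q_model_I.
split; last exact: mkrule_eneg_sat F_sub_I IG.
- apply/fdisjointP => l lneg; apply/negP => /Psi_ex[M [_ [_ _ FM MG] _]]; apply.
  exact: (mkrule_eneg_sat FM MG lneg).
- apply/fdisjointP; rewrite fdisjoint_sym fdisjointU1X fdisjointUX freshE BC /=.
  by rewrite fdisjoint_sym CF.
- move=> l; rewrite in_fsetD => /andP[lPsi lpos].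
  have lEps : l \in Eps `|` fset0 by rewrite fsetU0 (fsubsetP epos_Eps).
  move: lpos lPsi lEps; rewrite /= in_pos_neg_lits; case: l => [[] a] /= aDE lPsi lEps.
    have := Eps_all _ lEps lPsi J1 Q_answer_J1; rewrite /sat_lit /sat_litb /= !inE.
    case/orP=> [/eqP aq1|aF]; first by rewrite aq1 freshE in aDE.
    by move/fdisjointP: DF => /(_ a aDE); rewrite aF.
  have := Eps_all _ lEps lPsi J2 Q_answer_J2.
  by rewrite /sat_lit /sat_litb /= !inE aDE !orbT.
Qed.

Lemma mkrule_not_tautological : ~ tautological At Eps r.
Proof.
move=> taut.
have Q_answer_ne : exists M, Q_answer M by exists J1; apply: Q_answer_J1.
have wv0 : world_view P0 Q_answer := world_view_guess_independent Q_answer_ne answer_set_P0.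
have [Psi [[_ Psi_compat] [_ eqS]]] := (taut Q wf_Q Q_answer).2 wv0.
have /compatible_reduct_applies rI : compatible (Eps `|` fset0) Psi Q_answer.
  by apply: compatible_ext Psi_compat => M; rewrite eqS.
by have := Q_answer_I; rewrite eqS P1_answer_I //; tauto.
Qed.

End NonTautological.

Lemma rule_conflict_of_tautological (A B C D E F G At : {fset atom}) (Eps : {fset lit}) :
  wf_elp (ELP At Eps [:: mkrule A B C D E F G]) ->
  tautological At Eps (mkrule A B C D E F G) -> rule_conflict A B C D E F G.
Proof.
move=> [_ /(_ _ (or_introl erefl))[_ elits_Eps]] taut.
have epos_Eps := fsubset_trans (fsubsetUl _ _) elits_Eps.
have [q0 [q1 [q2 [q_uniq q_fresh]]]] := fresh_atoms (A `|` B `|` C `|` D `|` E `|` F `|` G).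
have [AB|] := boolP [disjoint A & B]%fset; last by left.
have [BCG|] := boolP [disjoint B & C `|` G]%fset; last by right; left.
have [CF|] := boolP [disjoint C & F]%fset; last by do 2!right; left.
have [DF|] := boolP [disjoint D & F]%fset; last by do 3!right; left.
have [EG|] := boolP [disjoint E & G]%fset; last by do 4!right; left.
have [FG|] := boolP [disjoint F & G]%fset; last by do 5!right.
move: BCG; rewrite fdisjointXU => /andP[BC BG].
by case: (mkrule_not_tautological AB BC BG CF DF EG FG q_uniq q_fresh epos_Eps taut).
Qed.

Theorem theorem4 (A B C D E F G : {fset atom}) (At : {fset atom}) (Eps : {fset lit}) :
  wf_elp (ELP At Eps [:: mkrule A B C D E F G]) ->
  (tautological At Eps (mkrule A B C D E F G) <->
   A `&` B != fset0 \/
   B `&` (C `|` G) != fset0 \/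
   C `&` F != fset0 \/
   D `&` F != fset0 \/
   E `&` G != fset0 \/
   F `&` G != fset0).
Proof.
move=> wf; split; first exact: rule_conflict_of_tautological.
move=> conflict; apply: tautological_of_reduct_sat => Phi M M'.
exact: mkrule_reduct_sat.
Qed.
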